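(* Let $\Pi$ be a set of primes containing at least two distinct primes, and let $\tau>2$ be a real number. Then the set $W^*_\tau(\Pi)$ contains uncountably many Liouville numbers.
   Context: For a set $\Pi$ of primes, let $Q(\Pi)$ be the set of positive integers divisible by no prime in $\Pi$. When $\Pi$ is finite, $Q(\Pi)$ is the set of positive integers coprime to $\prod_{\pi\in\Pi}\pi$. $W^*_\tau(\Pi)$ is the set of real $x$ satisfying both of the following: \begin{itemize} \item there are infinitely many integers $q\ge1$ with $q\notin Q(\Pi)$ for which some integer $p$ satisfies $|x-p/q|<q^{-\tau}$; \item there are only finitely many $q\in Q(\Pi)$ for which some integer $p$ satisfies $|x-p/q|<q^{-\tau}$. \end{itemize} A Liouville number is an irrational real $x$ such that for every $k>0$ there exist integers $p$ and $q\ge2$ with $0<|x-p/q|<q^{-k}$. *)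

From Stdlib Require Import Reals ZArith Znumtheory.
Open Scope R_scope.

Definition approx (tau x : R) (q : Z) : Prop :=
  exists p : Z, Rabs (x - IZR p / IZR q) < Rpower (IZR q) (- tau).

Definition inQ (Pi : Z -> Prop) (q : Z) : Prop :=
  (1 <= q)%Z /\ forall p : Z, Pi p -> ~ (p | q)%Z.

Definition Wstar (tau : R) (Pi : Z -> Prop) (x : R) : Prop :=
  (forall N : Z, exists q : Z, (N < q)%Z /\ (1 <= q)%Z /\ ~ inQ Pi q /\ approx tau x q) /\
  (exists N : Z, forall q : Z, inQ Pi q -> approx tau x q -> (q <= N)%Z).

Definition irrational (x : R) : Prop :=
  forall p q : Z, q <> 0%Z -> x <> IZR p / IZR q.

Definition Liouville (x : R) : Prop :=
  irrational x /\
  forall k : R, 0 < k ->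
    exists p q : Z, (2 <= q)%Z /\
      0 < Rabs (x - IZR p / IZR q) /\ Rabs (x - IZR p / IZR q) < Rpower (IZR q) (- k).

Definition uncountable (S : R -> Prop) : Prop :=
  ~ exists f : nat -> R, forall x, S x -> exists n, f n = x.

(* Fix a prime p in Pi and an integer M >= 2 with M > tau + 1 and
   (M - 1)(tau - 2) >= 2.  To every binary sequence b attach the exponents
   a_0 = 1, a_(k+1) = (k + M) a_k + b_k and the lacunary series
   x_b = sum_k p^(-a_k).  Its k-th partial sum is N_k / p^(a_k) with N_k = 1
   mod p, and the tail after it lies between p^(-a_(k+1)) and 2 p^(-a_(k+1)).
   - Taking q = p^(a_k) gives approximations of every exponent, so x_b is a
     Liouville number and satisfies the first condition of W*_tau(Pi).
   - If p does not divide q, then P/q differs from every partial sum by at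
     least 1/(q p^(a_k)); comparing this gap with |x_b - P/q| < q^(-tau) shows
     by induction on k that 2 p^(a_k) <= q^(tau-1) for all k when q is large,
     which is absurd.  This is the second condition of W*_tau(Pi).
   - b |-> x_b is injective (the tails are compared at the first index where
     two sequences differ), so Cantor's diagonal argument makes the set
     uncountable.
   Only one prime of Pi is used. *)

From Stdlib Require Import Reals ZArith Znumtheory Lia Lra ClassicalEpsilon.
From Coquelicot Require Import Coquelicot.
Open Scope R_scope.

Section Lacunary.
Variable t : nat -> R.
Hypothesis t_pos : forall j, 0 < t j.
Hypothesis t_halving : forall j, 2 * t (S j) <= t j.

Definition lac_sum : R := real (Lim_seq (sum_f_R0 t)).

(* Finite version of the tail bounds, with room for the next term. *)
Lemma lac_partial_tail k n :
  t (S k) <= sum_f_R0 t (S k + n)%nat - sum_f_R0 t k /\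
  sum_f_R0 t (S k + n)%nat - sum_f_R0 t k + t (S k + n)%nat <= 2 * t (S k).
Proof.
  induction n as [|n [IHlo IHup]].
  - rewrite Nat.add_0_r; simpl; lra.
  - rewrite Nat.add_succ_r, tech5.
    pose proof (t_pos (S (S k + n)%nat)); pose proof (t_halving (S k + n)%nat); lra.
Qed.

Lemma lac_cvg : is_lim_seq (sum_f_R0 t) lac_sum.
Proof.
  assert (Hex : ex_finite_lim_seq (sum_f_R0 t)).
  { apply ex_finite_lim_seq_incr with (M := sum_f_R0 t 0 + 2 * t 1).
    - intro n; simpl; pose proof (t_pos (S n)); lra.
    - intros [|n]; [pose proof (t_pos 1); lra|].
      destruct (lac_partial_tail 0 n) as [_ Hup]; pose proof (t_pos (S n)).
      simpl in *; lra. }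
  destruct Hex as [l Hl]; unfold lac_sum.
  rewrite (is_lim_seq_unique _ _ Hl); exact Hl.
Qed.

Lemma lac_tail k : t (S k) <= lac_sum - sum_f_R0 t k <= 2 * t (S k).
Proof.
  assert (Hlim : is_lim_seq (fun n => sum_f_R0 t (n + S k) - sum_f_R0 t k)
                            (lac_sum - sum_f_R0 t k)).
  { apply is_lim_seq_minus'; [|apply is_lim_seq_const].
    apply (is_lim_seq_incr_n (sum_f_R0 t) (S k)), lac_cvg. }
  split.
  - apply (is_lim_seq_le (fun _ => t (S k)) _ _ _) with (2 := is_lim_seq_const _) (3 := Hlim).
    intro n; rewrite Nat.add_comm; apply lac_partial_tail.
  - apply (is_lim_seq_le _ (fun _ => 2 * t (S k)) _ _) with (2 := Hlim) (3 := is_lim_seq_const _).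
    intro n; rewrite Nat.add_comm.
    destruct (lac_partial_tail k n) as [_ Hup]; pose proof (t_pos (S k + n)%nat); lra.
Qed.

End Lacunary.

Lemma lac_sum_lt (t t' : nat -> R) k :
  (forall j, 0 < t j) -> (forall j, 2 * t (S j) <= t j) ->
  (forall j, 0 < t' j) -> (forall j, 2 * t' (S j) <= t' j) ->
  sum_f_R0 t k = sum_f_R0 t' k -> t' (S k) + 2 * t' (S (S k)) < t (S k) ->
  lac_sum t' < lac_sum t.
Proof.
  intros Hpos Hhalf Hpos' Hhalf' Hsame Hsmall.
  pose proof (lac_tail t Hpos Hhalf k) as [Hlo _].
  pose proof (lac_tail t' Hpos' Hhalf' (S k)) as [_ Hup].
  rewrite tech5 in Hup; lra.
Qed.

Lemma exp_le_mono x y : x <= y -> exp x <= exp y.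
Proof. intros [Hlt| ->]; [apply Rlt_le, exp_increasing, Hlt | apply Rle_refl]. Qed.

Lemma exp_le_inv x y : exp x <= exp y -> x <= y.
Proof.
  intro H; destruct (Rle_or_lt x y) as [|Hlt]; [assumption|].
  apply exp_increasing in Hlt; lra.
Qed.

Lemma exp_ln2_shift y : exp (ln 2 + y) = 2 * exp y.
Proof. rewrite exp_plus, exp_ln; lra. Qed.

Lemma rat_gap P Q N D : (Q <> 0)%Z -> (0 < D)%Z ->
  IZR P / IZR Q <> IZR N / IZR D ->
  / (Rabs (IZR Q) * IZR D) <= Rabs (IZR P / IZR Q - IZR N / IZR D).
Proof.
  intros HQ HD Hne.
  assert (HQr : IZR Q <> 0) by (apply not_0_IZR; exact HQ).
  assert (HDr : 0 < IZR D) by (apply IZR_lt; exact HD).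
  set (z := (P * D - N * Q)%Z).
  assert (Hdiff : IZR P / IZR Q - IZR N / IZR D = IZR z / (IZR Q * IZR D)).
  { unfold z; rewrite minus_IZR, !mult_IZR; field; lra. }
  assert (Hz : (z <> 0)%Z).
  { intro Hz; apply Hne; apply Rminus_diag_uniq.
    rewrite Hdiff, Hz; unfold Rdiv; ring. }
  assert (Hz1 : 1 <= Rabs (IZR z)) by (rewrite <- abs_IZR; apply IZR_le; lia).
  assert (HQa : 0 < Rabs (IZR Q)) by (apply Rabs_pos_lt; exact HQr).
  rewrite Hdiff; unfold Rdiv.
  rewrite Rabs_mult, Rabs_inv, Rabs_mult, (Rabs_right (IZR D)) by lra.
  rewrite <- (Rmult_1_l (/ _)) at 1.
  apply Rmult_le_compat_r; [apply Rlt_le, Rinv_0_lt_compat; nra | exact Hz1].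
Qed.

(* If a prime divides D but neither Q nor N, then P/Q <> N/D: clearing
   denominators, p would divide N * Q. *)
Lemma rat_ne_of_prime p P Q N D : prime p -> (Q <> 0)%Z -> (D <> 0)%Z ->
  ~ (p | Q)%Z -> (p | D)%Z -> ~ (p | N)%Z -> IZR P / IZR Q <> IZR N / IZR D.
Proof.
  intros Hp HQ HD HpQ HpD HpN Heq.
  assert (Hcross : (P * D = N * Q)%Z).
  { apply eq_IZR; rewrite !mult_IZR.
    assert (IZR Q <> 0) by (apply not_0_IZR; exact HQ).
    assert (IZR D <> 0) by (apply not_0_IZR; exact HD).
    apply (f_equal (fun r => r * IZR Q * IZR D)) in Heq.
    field_simplify in Heq; [lra | assumption | assumption]. }
  assert (HpNQ : (p | N * Q)%Z) by (rewrite <- Hcross; apply Z.divide_mul_r, HpD).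
  destruct (prime_mult p Hp N Q HpNQ); contradiction.
Qed.

Fixpoint expo (M : nat) (b : nat -> bool) (k : nat) : nat :=
  match k with
  | O => 1
  | S k => (k + M) * expo M b k + Nat.b2n (b k)
  end%nat.

Lemma expo_growth M b k : ((k + M) * expo M b k <= expo M b (S k))%nat.
Proof. simpl; lia. Qed.

Section Exponents.
Variable M : nat.
Hypothesis M_ge2 : (2 <= M)%nat.

Lemma expo_pos b k : (1 <= expo M b k)%nat.
Proof. induction k as [|k IH]; [simpl; lia|]. pose proof (expo_growth M b k); nia. Qed.

Lemma expo_lt b k : (expo M b k < expo M b (S k))%nat.
Proof. pose proof (expo_growth M b k); pose proof (expo_pos b k); nia. Qed.

Lemma expo_lower b k : (k + 1 <= expo M b k)%nat.
Proof. induction k as [|k IH]; [simpl; lia|]. pose proof (expo_lt b k); lia. Qed.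

End Exponents.

Section Construction.
Variable p : Z.
Variable M : nat.
Hypothesis p_ge2 : (2 <= p)%Z.
Hypothesis M_ge2 : (2 <= M)%nat.

Lemma dvd_pow_self n : (0 < n)%nat -> (p | p ^ Z.of_nat n)%Z.
Proof.
  intro Hn; replace (Z.of_nat n) with (Z.succ (Z.of_nat (n - 1))) by lia.
  rewrite Z.pow_succ_r by lia; apply Z.divide_mul_l, Z.divide_refl.
Qed.

(* The denominator p^(a_k) and numerator N_k of the k-th partial sum. *)
Definition denom (b : nat -> bool) (k : nat) : Z := (p ^ Z.of_nat (expo M b k))%Z.

Fixpoint numer (b : nat -> bool) (k : nat) : Z :=
  match k with
  | O => 1%Z
  | S k => (numer b k * p ^ Z.of_nat (expo M b (S k) - expo M b k) + 1)%Z
  end.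

Definition term (b : nat -> bool) (j : nat) : R := / IZR (denom b j).

Definition partial (b : nat -> bool) (k : nat) : R := sum_f_R0 (term b) k.

Definition lden (b : nat -> bool) (k : nat) : R := INR (expo M b k) * ln (IZR p).

Lemma denom_succ b k :
  denom b (S k) = (denom b k * p ^ Z.of_nat (expo M b (S k) - expo M b k))%Z.
Proof.
  unfold denom; rewrite <- Z.pow_add_r by lia.
  pose proof (expo_lt M M_ge2 b k); f_equal; lia.
Qed.

Lemma p_dvd_denom b k : (p | denom b k)%Z.
Proof.
  apply dvd_pow_self; pose proof (expo_pos M M_ge2 b k); lia.
Qed.

Lemma denom_gt b k : (Z.of_nat k < denom b k)%Z.
Proof.
  pose proof (expo_lower M M_ge2 b k).
  pose proof (Z.pow_gt_lin_r p (Z.of_nat (expo M b k)) ltac:(lia) ltac:(lia)).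
  unfold denom; lia.
Qed.

Lemma denom_ge_p b k : (p <= denom b k)%Z.
Proof.
  apply Z.divide_pos_le; [pose proof (denom_gt b k); lia | apply p_dvd_denom].
Qed.

(* N_(k+1) = N_k p^(a_(k+1) - a_k) + 1, so N_k = 1 mod p. *)
Lemma numer_not_dvd b k : prime p -> ~ (p | numer b k)%Z.
Proof.
  intros Hp Hdvd.
  assert (Hone : (p | 1)%Z).
  { destruct k as [|k]; [exact Hdvd|].
    assert (Hpow : (p | p ^ Z.of_nat (expo M b (S k) - expo M b k))%Z).
    { apply dvd_pow_self; pose proof (expo_lt M M_ge2 b k); lia. }
    exact (Z.divide_add_cancel_r _ _ _ (Z.divide_mul_r _ _ _ Hpow) Hdvd). }
  apply Z.divide_1_r_nonneg in Hone; lia.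
Qed.

Lemma partial_repr b k : partial b k = IZR (numer b k) / IZR (denom b k).
Proof.
  induction k as [|k IH].
  - unfold partial, term; simpl sum_f_R0; simpl numer.
    unfold Rdiv; ring.
  - unfold partial in *; rewrite tech5, IH; unfold term.
    rewrite denom_succ; cbn [numer].
    assert (HD : IZR (denom b k) <> 0) by (apply not_0_IZR; pose proof (denom_gt b k); lia).
    assert (He : IZR (p ^ Z.of_nat (expo M b (S k) - expo M b k)) <> 0).
    { apply not_0_IZR, Z.pow_nonzero; lia. }
    rewrite plus_IZR, !mult_IZR; field; auto.
Qed.

Lemma ln_p_bounds : 0 < ln 2 <= ln (IZR p).
Proof.
  assert (H2p : 2 <= IZR p) by (apply IZR_le; exact p_ge2).
  split; [rewrite <- ln_1; apply ln_increasing | apply ln_le]; lra.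
Qed.

Lemma denom_exp b k : IZR (denom b k) = exp (lden b k).
Proof.
  assert (Hp : 0 < IZR p) by (apply IZR_lt; lia).
  unfold denom, lden; rewrite <- pow_IZR, <- ln_pow by exact Hp.
  rewrite exp_ln; [reflexivity | apply pow_lt, Hp].
Qed.

Lemma term_exp b k : term b k = exp (- lden b k).
Proof. unfold term; rewrite denom_exp, exp_Ropp; reflexivity. Qed.

Lemma lden_step b k : lden b k + ln (IZR p) <= lden b (S k).
Proof.
  unfold lden; pose proof ln_p_bounds.
  assert (Hlt : INR (expo M b k) + 1 <= INR (expo M b (S k))).
  { rewrite <- S_INR; apply le_INR, expo_lt, M_ge2. }
  nra.
Qed.

Lemma lden_growth b k : INR (k + M) * lden b k <= lden b (S k).
Proof.
  unfold lden; pose proof ln_p_bounds.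
  assert (Hg : INR (k + M) * INR (expo M b k) <= INR (expo M b (S k))).
  { rewrite <- mult_INR; apply le_INR, expo_growth. }
  nra.
Qed.

Lemma lden_lower b k : (INR k + 1) * ln (IZR p) <= lden b k.
Proof.
  unfold lden; pose proof ln_p_bounds.
  assert (Hl : INR k + 1 <= INR (expo M b k)).
  { rewrite <- S_INR; apply le_INR; pose proof (expo_lower M M_ge2 b k); lia. }
  nra.
Qed.

Lemma lden_nonneg b k : 0 <= lden b k.
Proof. pose proof (lden_lower b k); pose proof ln_p_bounds; pose proof (pos_INR k); nra. Qed.

Lemma lden_unbounded b c : exists k, c < lden b k.
Proof.
  destruct (INR_archimed (ln (IZR p)) c) as [k Hk]; [pose proof ln_p_bounds; lra|].
  exists k; pose proof (lden_lower b k); pose proof ln_p_bounds; nra.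
Qed.

Lemma term_pos b j : 0 < term b j.
Proof. rewrite term_exp; apply exp_pos. Qed.

Lemma term_halving b j : 2 * term b (S j) <= term b j.
Proof.
  rewrite !term_exp, <- exp_ln2_shift; apply exp_le_mono.
  pose proof (lden_step b j); pose proof ln_p_bounds; lra.
Qed.

Definition xval (b : nat -> bool) : R := lac_sum (term b).

Lemma tail_bounds b k :
  exp (- lden b (S k)) <= xval b - partial b k <= exp (ln 2 - lden b (S k)).
Proof.
  pose proof (lac_tail (term b) (term_pos b) (term_halving b) k) as Htail.
  replace (ln 2 - lden b (S k)) with (ln 2 + - lden b (S k)) by ring.
  rewrite exp_ln2_shift, <- !term_exp; exact Htail.
Qed.

Lemma partial_gap b k P Q : (Q <> 0)%Z -> IZR P / IZR Q <> partial b k ->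
  exp (- (ln (Rabs (IZR Q)) + lden b k)) <= Rabs (IZR P / IZR Q - partial b k).
Proof.
  intros HQ Hne; rewrite partial_repr in *.
  assert (HQa : 0 < Rabs (IZR Q)) by (apply Rabs_pos_lt, not_0_IZR, HQ).
  rewrite exp_Ropp, exp_plus, exp_ln, <- denom_exp by exact HQa.
  apply rat_gap; [exact HQ | pose proof (denom_gt b k); lia | exact Hne].
Qed.

Lemma coprime_ne_partial b k P Q : prime p -> (Q <> 0)%Z -> ~ (p | Q)%Z ->
  IZR P / IZR Q <> partial b k.
Proof.
  intros Hp HQ HpQ; rewrite partial_repr.
  apply (rat_ne_of_prime p); auto.
  - pose proof (denom_gt b k); lia.
  - apply p_dvd_denom.
  - apply numer_not_dvd, Hp.
Qed.

Lemma approx_by_partial b k K : K + 1 < INR k + INR M ->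
  0 < xval b - partial b k < Rpower (IZR (denom b k)) (- K).
Proof.
  intro HK; pose proof (tail_bounds b k) as [Hlo Hup].
  pose proof (exp_pos (- lden b (S k))); split; [lra|].
  unfold Rpower; rewrite denom_exp, ln_exp.
  eapply Rle_lt_trans; [exact Hup|]; apply exp_increasing.
  pose proof (lden_growth b k) as Hg; rewrite plus_INR in Hg.
  pose proof (lden_lower b k); pose proof ln_p_bounds; pose proof (pos_INR k).
  assert (0 < (INR k + INR M - K - 1) * lden b k) by (apply Rmult_lt_0_compat; nra).
  nra.
Qed.

(* Irrationality: if x_b = P/Q, comparing the gap 1/(|Q| p^(a_k)) with the tail
   2 p^(-a_(k+1)) <= 2 p^(-2 a_k) bounds a_k uniformly, which is absurd. *)
Lemma xval_irrational b : irrational (xval b).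
Proof.
  intros P Q HQ Hx.
  assert (Hbound : forall k, lden b k <= ln 2 + ln (Rabs (IZR Q))).
  { intro k; pose proof (tail_bounds b k) as [Hlo Hup].
    pose proof (exp_pos (- lden b (S k))).
    assert (Hne : IZR P / IZR Q <> partial b k) by (rewrite <- Hx; lra).
    pose proof (partial_gap b k P Q HQ Hne) as Hgap.
    rewrite <- Hx, (Rabs_right (xval b - partial b k)) in Hgap by lra.
    pose proof (exp_le_inv _ _ (Rle_trans _ _ _ Hgap Hup)) as Hlog.
    pose proof (lden_growth b k) as Hg; rewrite plus_INR in Hg.
    assert (2 <= INR M) by (apply (le_INR 2), M_ge2).
    pose proof (pos_INR k); pose proof (lden_nonneg b k); nra. }
  destruct (lden_unbounded b (ln 2 + ln (Rabs (IZR Q)))) as [k Hk].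
  specialize (Hbound k); lra.
Qed.

Lemma xval_liouville b : Liouville (xval b).
Proof.
  split; [apply xval_irrational|].
  intros K HK; destruct (INR_archimed 1 K) as [k Hk]; [lra|].
  exists (numer b k), (denom b k); split; [pose proof (denom_ge_p b k); lia|].
  rewrite <- partial_repr.
  assert (Happ : K + 1 < INR k + INR M) by (pose proof (le_INR 2 M M_ge2); simpl in *; lra).
  pose proof (approx_by_partial b k K Happ) as Hx.
  rewrite Rabs_right by lra; split; lra.
Qed.

Lemma xval_many_approx b (Pi : Z -> Prop) tau : Pi p -> tau + 1 < INR M ->
  forall N : Z, exists q : Z,
    (N < q)%Z /\ (1 <= q)%Z /\ ~ inQ Pi q /\ approx tau (xval b) q.
Proof.
  intros HPi HM N; set (k := Z.to_nat N).
  exists (denom b k); pose proof (denom_gt b k); pose proof (denom_ge_p b k).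
  split; [lia|]; split; [lia|]; split.
  - intros [_ Hcop]; exact (Hcop p HPi (p_dvd_denom b k)).
  - exists (numer b k); rewrite <- partial_repr.
    assert (Happ : tau + 1 < INR k + INR M) by (pose proof (pos_INR k); lra).
    pose proof (approx_by_partial b k tau Happ) as Hx.
    rewrite Rabs_right by lra; lra.
Qed.

(* One step of the argument against good approximations P/q with p not dividing
   q: if 2 p^(a_k) <= q^(tau-1), then p^(a_(k+1)) < 4 q p^(a_k), because the gap
   1/(q p^(a_k)) between P/q and the k-th partial sum must be covered by
   |x_b - P/q| < q^(-tau) and the tail 2 p^(-a_(k+1)). *)
Lemma coprime_step b k (q P : Z) tau : prime p -> (1 <= q)%Z -> ~ (p | q)%Z ->
  Rabs (xval b - IZR P / IZR q) < Rpower (IZR q) (- tau) ->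
  ln 2 + lden b k <= (tau - 1) * ln (IZR q) ->
  lden b (S k) < 2 * ln 2 + ln (IZR q) + lden b k.
Proof.
  intros Hp Hq HpQ Happ Hind; set (L := ln (IZR q)) in *.
  assert (HqR : Rabs (IZR q) = IZR q) by (apply Rabs_right, IZR_ge; lia).
  assert (Hne := coprime_ne_partial b k P q Hp ltac:(lia) HpQ).
  pose proof (partial_gap b k P q ltac:(lia) Hne) as Hgap; rewrite HqR in Hgap; fold L in Hgap.
  pose proof (tail_bounds b k) as [Hlo Hup]; pose proof (exp_pos (- lden b (S k))).
  assert (Htri : Rabs (IZR P / IZR q - partial b k)
                 <= Rabs (xval b - IZR P / IZR q) + (xval b - partial b k)).
  { unfold Rabs; repeat destruct Rcase_abs; lra. }
  unfold Rpower in Happ; fold L in Happ.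
  assert (Hsmall : exp (- tau * L) <= exp (- (ln 2 + L + lden b k))) by (apply exp_le_mono; lra).
  assert (Hdouble : exp (- (L + lden b k)) = 2 * exp (- (ln 2 + L + lden b k))).
  { rewrite <- exp_ln2_shift; f_equal; ring. }
  assert (Hcmp : exp (- (ln 2 + L + lden b k)) < exp (ln 2 - lden b (S k))) by lra.
  apply exp_lt_inv in Hcmp; lra.
Qed.

(* The arithmetic heart of the second condition, in logarithmic form: with
   alpha, beta the logarithms of p^(a_k), p^(a_(k+1)), L = log q and c = log 2,
   the growth beta >= (m + 1) alpha and the step bound beta < 2c + L + alpha
   keep c + beta below (tau - 1) L once L is large. *)
Lemma log_bound_propagates m tau c L alpha beta :
  1 <= m -> 2 <= m * (tau - 2) -> 0 < c -> 10 * c <= (tau - 2) * L -> 0 <= alpha ->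
  (m + 1) * alpha <= beta -> beta < 2 * c + L + alpha -> c + beta <= (tau - 1) * L.
Proof.
  intros Hm HmT Hc HL Ha Hgrow Hstep.
  assert (Htau : 0 < tau - 2) by nra.
  assert (HLpos : 0 < L) by nra.
  assert (Hma : m * alpha < 2 * c + L) by nra.
  assert (Hbig : 5 * m * c + L <= m * (tau - 2) * L) by nra.
  assert (Hmb : m * (c + beta) < m * ((tau - 1) * L)) by nra.
  nra.
Qed.

(* For q large, the invariant 2 p^(a_k) <= q^(tau-1)
   propagates along k by the two previous lemmas, contradicting a_k -> oo. *)
Lemma xval_few_coprime b (Pi : Z -> Prop) tau : prime p -> Pi p ->
  2 <= (INR M - 1) * (tau - 2) ->
  exists N : Z, forall q : Z, inQ Pi q -> approx tau (xval b) q -> (q <= N)%Z.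
Proof.
  intros Hp HPi HM; pose proof ln_p_bounds.
  assert (Htau : 0 < tau - 2) by (pose proof (le_INR 2 M M_ge2); simpl in *; nra).
  set (c := (11 * ln 2 + ln (IZR p)) / (tau - 2)).
  exists (up (exp c)); intros q [Hq1 Hcop] [P HP].
  destruct (Z_le_gt_dec q (up (exp c))) as [|Hgt]; [assumption|exfalso].
  set (L := ln (IZR q)) in *.
  assert (HL : 11 * ln 2 + ln (IZR p) < (tau - 2) * L).
  { assert (Hc : c < L).
    { unfold L; rewrite <- (ln_exp c); apply ln_increasing; [apply exp_pos|].
      pose proof (archimed (exp c)) as [Hup _].
      pose proof (IZR_lt _ _ (Z.gt_lt _ _ Hgt)); lra. }
    unfold c in Hc; apply Rlt_div_l in Hc; lra. }
  assert (Hinv : forall k, ln 2 + lden b k <= (tau - 1) * L).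
  { induction k as [|k IH].
    - unfold lden; simpl expo; rewrite Rmult_1_l; nra.
    - pose proof (coprime_step b k q P tau Hp Hq1 (Hcop p HPi) HP IH) as Hstep.
      fold L in Hstep.
      pose proof (lden_growth b k) as Hg; rewrite plus_INR in Hg.
      pose proof (pos_INR k); pose proof (lden_nonneg b k).
      apply (log_bound_propagates (INR M - 1) tau (ln 2) L (lden b k)); try lra.
      + pose proof (le_INR 2 M M_ge2); simpl in *; lra.
      + nra. }
  destruct (lden_unbounded b ((tau - 1) * L)) as [k Hk].
  specialize (Hinv k); lra.
Qed.

Lemma xval_Wstar b (Pi : Z -> Prop) tau : prime p -> Pi p ->
  tau + 1 < INR M -> 2 <= (INR M - 1) * (tau - 2) -> Wstar tau Pi (xval b).
Proof.
  intros Hp HPi HM1 HM2; split.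
  - apply xval_many_approx; assumption.
  - apply xval_few_coprime; assumption.
Qed.

Lemma expo_prefix b b' k : (forall i, (i < k)%nat -> b i = b' i) ->
  forall j, (j <= k)%nat -> expo M b j = expo M b' j.
Proof.
  intros Hagree j; induction j as [|j IH]; intro Hj; [reflexivity|].
  simpl; rewrite IH, Hagree by lia; reflexivity.
Qed.

Lemma partial_prefix b b' k : (forall i, (i < k)%nat -> b i = b' i) ->
  partial b k = partial b' k.
Proof.
  intro Hagree; apply sum_eq; intros j Hj.
  unfold term, denom; rewrite (expo_prefix b b' k Hagree j Hj); reflexivity.
Qed.

(* At the first index k where b k = false and b' k = true, the (k+1)-st term of
   x_b' is p times smaller than that of x_b and the following one smaller still,
   so x_b' < x_b. *)
Lemma xval_first_diff b b' k : (forall i, (i < k)%nat -> b i = b' i) ->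
  b k = false -> b' k = true -> xval b' < xval b.
Proof.
  intros Hagree Hb Hb'.
  apply (lac_sum_lt (term b) (term b') k (term_pos b) (term_halving b)
           (term_pos b') (term_halving b') (partial_prefix b b' k Hagree)).
  set (l := lden b (S k)); pose proof ln_p_bounds.
  assert (He1 : expo M b' (S k) = S (expo M b (S k))).
  { simpl; rewrite Hb, Hb', (expo_prefix b b' k Hagree k) by lia; simpl; lia. }
  assert (He2 : (expo M b' (S k) + 2 <= expo M b' (S (S k)))%nat).
  { pose proof (expo_growth M b' (S k)); pose proof (expo_pos M M_ge2 b' (S k)); nia. }
  assert (Hl1 : lden b' (S k) = l + ln (IZR p)) by (unfold l, lden; rewrite He1, S_INR; ring).
  assert (Hl2 : l + 3 * ln (IZR p) <= lden b' (S (S k))).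
  { apply le_INR in He2; rewrite plus_INR, He1, S_INR in He2.
    replace (INR 2) with 2 in He2 by (simpl; lra); unfold l, lden; nra. }
  set (u := exp (- ln (IZR p))).
  assert (Hu : 0 < u <= / 2).
  { split; [apply exp_pos|]; unfold u.
    rewrite exp_Ropp, exp_ln by (apply IZR_lt; lia).
    apply Rinv_le_contravar; [lra | apply IZR_le; exact p_ge2]. }
  rewrite !term_exp, Hl1; fold l.
  assert (Hnext : exp (- lden b' (S (S k))) <= exp (- l) * (u * (u * u))).
  { unfold u; rewrite <- !exp_plus; apply exp_le_mono; lra. }
  replace (exp (- (l + ln (IZR p)))) with (exp (- l) * u)
    by (unfold u; rewrite <- exp_plus; f_equal; ring).
  assert (Hu3 : u * (u * u) <= / 8) by nra.
  pose proof (exp_pos (- l)) as HE.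
  pose proof (Rmult_le_compat_l _ _ _ (Rlt_le _ _ HE) (proj2 Hu)).
  pose proof (Rmult_le_compat_l _ _ _ (Rlt_le _ _ HE) Hu3).
  lra.
Qed.

Lemma xval_injective b b' : xval b = xval b' -> forall i, b i = b' i.
Proof.
  intro Heq.
  assert (Hbelow : forall k i, (i < k)%nat -> b i = b' i).
  { induction k as [|k IH]; intros i Hi; [lia|].
    assert (Hk : b k = b' k).
    { destruct (b k) eqn:Hb, (b' k) eqn:Hb'; try reflexivity; exfalso.
      - pose proof (xval_first_diff b' b k (fun i Hi => eq_sym (IH i Hi)) Hb' Hb); lra.
      - pose proof (xval_first_diff b b' k IH Hb Hb'); lra. }
    destruct (Nat.eq_dec i k) as [->|]; [exact Hk | apply IH; lia]. }
  intro i; apply (Hbelow (S i)); lia.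
Qed.

End Construction.

Lemma uncountable_of_cantor (S : R -> Prop) (phi : (nat -> bool) -> R) :
  (forall b, S (phi b)) -> (forall b b', phi b = phi b' -> forall i, b i = b' i) ->
  uncountable S.
Proof.
  intros HS Hinj [f Hf].
  set (pre := fun n => epsilon (inhabits (fun _ : nat => true)) (fun b => phi b = f n)).
  set (d := fun i => negb (pre i i)).
  destruct (Hf (phi d) (HS d)) as [n Hn].
  assert (Hpre : phi (pre n) = f n).
  { unfold pre; apply epsilon_spec; exists d; symmetry; exact Hn. }
  pose proof (Hinj (pre n) d (eq_trans Hpre Hn) n) as Hdiag.
  unfold d in Hdiag; destruct (pre n n); discriminate.
Qed.

Theorem theorem2 (Pi : Z -> Prop)
  (Hprime : forall p : Z, Pi p -> prime p)
  (Htwo : exists p1 p2 : Z, Pi p1 /\ Pi p2 /\ p1 <> p2)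
  (tau : R) (Htau : 2 < tau) :
  uncountable (fun x => Liouville x /\ Wstar tau Pi x).
Proof.
  destruct Htwo as [p [_ [HPi _]]].
  pose proof (Hprime p HPi) as Hp; pose proof (prime_ge_2 p Hp) as Hp2.
  destruct (INR_archimed 1 (tau + 1 + 2 / (tau - 2))) as [M HM]; [lra|].
  assert (Hfrac : 2 / (tau - 2) * (tau - 2) = 2) by (field; lra).
  assert (Hfrac_pos : 0 < 2 / (tau - 2)) by (apply Rdiv_lt_0_compat; lra).
  assert (HM2 : (2 <= M)%nat) by (apply INR_le; simpl; lra).
  assert (HMgap : 2 <= (INR M - 1) * (tau - 2)) by nra.
  apply (uncountable_of_cantor _ (xval p M)).
  - intro b; split.
    + apply xval_liouville; assumption.
    + apply (xval_Wstar p M Hp2 HM2 b Pi tau Hp HPi); lra.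
  - apply xval_injective; assumption.
Qed.
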